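(* Let $\nu\in\mathbb{N}$, let $(X,d)$ be a $\nu$-generalized metric space, and let $\{x_n\}_{n\in\mathbb{N}}$ be a sequence in $X$ whose terms are pairwise distinct. Suppose that for every $\epsilon>0$ and for any two subsequences $\{x_{p_i}\}$ and $\{x_{q_i}\}$ of $\{x_n\}$, if $\limsup_{i\to\infty} d(x_{p_i},x_{q_i})\le\epsilon$, then there is $N$ such that $d(x_{p_i+1},x_{q_i+1})\le\epsilon$ for all $i\ge N$. If $d(x_n,x_{n+1})\to0$ and $d(x_n,x_{n+2})\to0$ as $n\to\infty$, then $\{x_n\}$ is Cauchy.
   Context: Let $X$ be a nonempty set, $d:X\times X\to[0,\infty)$, and $\nu\in\mathbb{N}$. $(X,d)$ is a $\nu$-generalized metric space if: (1) $d(x,y)=0$ iff $x=y$; (2) $d(x,y)=d(y,x)$ for all $x,y$; (3) $d(x,y)\le d(x,u_1)+d(u_1,u_2)+\dots+d(u_\nu,y)$ for every set $\{x,u_1,\dots,u_\nu,y\}$ of $\nu+2$ pairwise distinct elements of $X$. For $k\in\mathbb{N}$, a sequence $\{x_n\}$ in $X$ is $k$-Cauchy if $\lim_{n\to\infty}\sup\{d(x_n,x_{n+1+mk}): m\in\mathbb{Z}^+\}=0$, where $\mathbb{Z}^+$ denotes the nonnegative integers; it is Cauchy if it is $1$-Cauchy. A subsequence $\{x_{p_i}\}$ means $p_1<p_2<\cdots$ in $\mathbb{N}$. *)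

From Stdlib Require Import Reals List.
Import ListNotations.
Open Scope R_scope.

Fixpoint chain_len {X : Type} (d : X -> X -> R) (l : list X) : R :=
  match l with
  | a :: ((b :: _) as t) => d a b + chain_len d t
  | _ => 0
  end.

Definition gen_metric (X : Type) (d : X -> X -> R) (nu : nat) : Prop :=
  (forall x y, 0 <= d x y) /\
  (forall x y, d x y = 0 <-> x = y) /\
  (forall x y, d x y = d y x) /\
  (forall (x y : X) (us : list X),
      length us = nu -> NoDup (x :: us ++ [y]) ->
      d x y <= chain_len d (x :: us ++ [y])).

(* k-Cauchy: lim_{n->oo} sup { d(x_n, x_{n+1+m k}) : m >= 0 } = 0, unfolded. *)
Definition k_Cauchy {X : Type} (d : X -> X -> R) (k : nat) (x : nat -> X) : Prop :=
  forall eps, 0 < eps -> exists N : nat, forall n m : nat, (N <= n)%nat ->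
    d (x n) (x (n + 1 + m * k)%nat) <= eps.

Definition Cauchy_seq {X : Type} (d : X -> X -> R) (x : nat -> X) : Prop :=
  k_Cauchy d 1 x.

Definition strictly_incr (p : nat -> nat) : Prop := forall i, (p i < p (S i))%nat.

Definition limsup_le (u : nat -> R) (eps : R) : Prop :=
  forall delta, 0 < delta -> exists N : nat, forall i, (N <= i)%nat -> u i <= eps + delta.

(* Suppose the sequence is not Cauchy, with threshold E. Because consecutive
   distances tend to 0, one finds infinitely many, pairwise separated, index
   pairs a < c where d(x_a, x_c) crosses E for the first time: d(x_a, x_c) > E
   but d(x_a, x_{c-1}) <= E. Put p = a - 1 and q = c - 1. The nu-generalized
   triangle inequality along a zigzag path x_{a-1}, x_{a-3}, ..., x_{a-2}, x_a,
   x_{c-1} with steps of index size 1 or 2 gives d(x_p, x_q) <= E + o(1), so the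
   hypothesis on subsequences yields d(x_a, x_c) <= E eventually, a contradiction. *)
From Stdlib Require Import Reals List Lra Lia Classical ClassicalEpsilon FinFun.
Import ListNotations.
Open Scope R_scope.

Lemma nat_ind2 (P : nat -> Prop) :
  P 0%nat -> P 1%nat -> (forall n, P n -> P (S (S n))) -> forall n, P n.
Proof.
  intros H0 H1 HS n.
  enough (P n /\ P (S n)) by tauto.
  induction n as [|n [IH IH']]; auto.
Qed.

Lemma strictly_incr_ge (p : nat -> nat) : strictly_incr p -> forall i, (i <= p i)%nat.
Proof.
  intros Hp i. induction i as [|i IH]; [lia|]. specialize (Hp i). lia.
Qed.

Lemma Un_cv_0_eventually_le (u : nat -> R) (e : R) :
  Un_cv u 0 -> 0 < e -> exists N, forall n, (N <= n)%nat -> u n <= e.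
Proof.
  intros Hu He. destruct (Hu e He) as [N HN]. exists N. intros n Hn.
  specialize (HN n Hn). unfold R_dist in HN. rewrite Rminus_0_r in HN.
  apply Rabs_def2 in HN. lra.
Qed.

Section Chains.
Variables (X : Type) (d : X -> X -> R).

Lemma chain_len_app (l r : list X) (z : X) :
  chain_len d (l ++ z :: r) = chain_len d (l ++ [z]) + chain_len d (z :: r).
Proof.
  induction l as [|a [|b l] IH]; simpl in *; [lra|lra|].
  rewrite IH. lra.
Qed.

Lemma chain_len_map (Y : Type) (f : Y -> X) (l : list Y) :
  chain_len d (map f l) = chain_len (fun a b => d (f a) (f b)) l.
Proof.
  induction l as [|a [|b l] IH]; simpl in *; [reflexivity|reflexivity|].
  rewrite IH. reflexivity.
Qed.

End Chains.

(* The indices visited strictly between t and t+1 by a path going down from t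
   in steps of 2 and back up on the other parity, e.g. t, t-2, t-3, t-1, t+1. *)
Fixpoint zigzag (m t : nat) : list nat :=
  match m with
  | O => []
  | S O => [pred t]
  | S (S m) => (t - 2)%nat :: zigzag m (t - 2) ++ [pred t]
  end.

Lemma zigzag_length (m t : nat) : length (zigzag m t) = m.
Proof.
  revert t. induction m using nat_ind2; intro t; [reflexivity|reflexivity|].
  cbn [zigzag length]. rewrite length_app, IHm. simpl. lia.
Qed.

Lemma zigzag_range (m t u : nat) :
  (m <= t)%nat -> In u (zigzag m t) -> (t - m <= u < t)%nat.
Proof.
  revert t. induction m using nat_ind2; intros t Hmt Hu; simpl in Hu.
  - contradiction.
  - destruct Hu as [<-|[]]. lia.
  - destruct Hu as [<-|Hu]; [lia|].
    apply in_app_or in Hu as [Hu|[<-|[]]]; [|lia].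
    specialize (IHm (t - 2)%nat ltac:(lia) Hu). lia.
Qed.

Lemma zigzag_NoDup (m t : nat) : (m <= t)%nat -> NoDup (zigzag m t).
Proof.
  revert t. induction m using nat_ind2; intros t Hmt.
  - constructor.
  - repeat constructor. simpl. tauto.
  - cbn [zigzag]. constructor.
    + intro Hin. apply in_app_or in Hin as [Hin|[Hin|[]]].
      * apply zigzag_range in Hin; lia.
      * lia.
    + apply NoDup_app; [apply IHm; lia|repeat constructor; simpl; tauto|].
      intros u Hu [<-|[]]. apply zigzag_range in Hu; lia.
Qed.

Lemma zigzag_path_NoDup (m t q : nat) :
  (m <= t)%nat -> (S t < q)%nat -> NoDup (t :: (zigzag m t ++ [S t]) ++ [q]).
Proof.
  intros Hmt Htq. rewrite <- app_assoc. constructor.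
  - intro Hin. apply in_app_or in Hin as [Hin|[Hin|[Hin|[]]]]; [|lia|lia].
    apply zigzag_range in Hin; lia.
  - apply NoDup_app; [now apply zigzag_NoDup|repeat constructor; simpl; lia|].
    intros u Hu [<-|[<-|[]]]; apply zigzag_range in Hu; lia.
Qed.

Section ZigzagChain.
Variables (dd : nat -> nat -> R) (eta : R) (L : nat).
Hypothesis dd_sym : forall i j, dd i j = dd j i.
Hypothesis dd_step1 : forall j, (L <= j)%nat -> dd j (S j) <= eta.
Hypothesis dd_step2 : forall j, (L <= j)%nat -> dd j (S (S j)) <= eta.

Lemma zigzag_chain_le (m t : nat) :
  (L + m <= t)%nat -> chain_len dd (t :: zigzag m t ++ [S t]) <= INR (S m) * eta.
Proof.
  revert t. induction m using nat_ind2; intros t Ht.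
  - simpl. pose proof (dd_step1 t ltac:(lia)). lra.
  - simpl. rewrite dd_sym.
    pose proof (dd_step1 (pred t) ltac:(lia)).
    pose proof (dd_step2 (pred t) ltac:(lia)).
    replace (S (pred t)) with t in * by lia. lra.
  - cbn [zigzag].
    replace (pred t) with (S (t - 2)) by lia.
    rewrite <- app_comm_cons, <- app_assoc, !app_comm_cons.
    change ([S (t - 2)] ++ [S t]) with [S (t - 2); S t].
    rewrite chain_len_app.
    change (chain_len dd ((t :: (t - 2)%nat :: zigzag m (t - 2)) ++ [S (t - 2)]))
      with (dd t (t - 2) + chain_len dd ((t - 2)%nat :: zigzag m (t - 2) ++ [S (t - 2)])).
    simpl (chain_len dd [S (t - 2); S t]).
    pose proof (IHm (t - 2)%nat ltac:(lia)) as IH.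
    pose proof (dd_step2 (t - 2)%nat ltac:(lia)) as Hdown.
    pose proof (dd_step2 (S (t - 2)) ltac:(lia)) as Hup.
    replace (S (S (t - 2))) with t in Hdown by lia.
    replace (S (S (S (t - 2)))) with (S t) in Hup by lia.
    rewrite dd_sym in Hdown. rewrite !S_INR in *. lra.
Qed.

End ZigzagChain.

Section GeneralizedMetric.
Variables (X : Type) (d : X -> X -> R) (nu : nat) (x : nat -> X).
Hypothesis Hnu : (1 <= nu)%nat.
Hypothesis Hd : gen_metric X d nu.
Hypothesis Hinj : forall n m : nat, n <> m -> x n <> x m.

Lemma gen_metric_index_chain (i j : nat) (us : list nat) :
  length us = nu -> NoDup (i :: us ++ [j]) ->
  d (x i) (x j) <= chain_len (fun a b => d (x a) (x b)) (i :: us ++ [j]).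
Proof.
  intros Hlen Hnd. destruct Hd as [_ [_ [_ Hrect]]].
  rewrite <- chain_len_map. cbn [map]. rewrite map_app.
  apply Hrect; [now rewrite length_map|].
  replace (x i :: map x us ++ [x j]) with (map x (i :: us ++ [j]))
    by (cbn [map]; now rewrite map_app).
  apply Injective_map_NoDup; [|exact Hnd].
  intros a b Hab. destruct (Nat.eq_dec a b) as [|Hne]; [assumption|].
  exfalso. exact (Hinj a b Hne Hab).
Qed.

Lemma gen_metric_shift_le (eta : R) (L t q : nat) :
  (forall j, (L <= j)%nat -> d (x j) (x (S j)) <= eta) ->
  (forall j, (L <= j)%nat -> d (x j) (x (S (S j))) <= eta) ->
  (L + nu <= S t)%nat -> (S t < q)%nat ->
  d (x t) (x q) <= INR nu * eta + d (x (S t)) (x q).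
Proof.
  intros Hstep1 Hstep2 Ht Hq.
  pose proof Hd as [_ [_ [Hsym _]]].
  set (m := pred nu).
  replace nu with (S m) by (unfold m; lia).
  eapply Rle_trans.
  - apply (gen_metric_index_chain t q (zigzag m t ++ [S t])).
    + rewrite length_app, zigzag_length. simpl. lia.
    + apply zigzag_path_NoDup; lia.
  - rewrite <- app_assoc.
    change ([S t] ++ [q]) with [S t; q].
    rewrite app_comm_cons, chain_len_app, <- app_comm_cons.
    pose proof (zigzag_chain_le (fun a b => d (x a) (x b)) eta L
      (fun a b => Hsym (x a) (x b)) Hstep1 Hstep2 m t ltac:(lia)).
    simpl (chain_len _ [S t; q]). lra.
Qed.

Lemma eventually_shift_le :
  Un_cv (fun n => d (x n) (x (S n))) 0 ->
  Un_cv (fun n => d (x n) (x (S (S n)))) 0 ->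
  forall delta, 0 < delta -> exists M, forall t q, (M <= t)%nat -> (S t < q)%nat ->
    d (x t) (x q) <= delta + d (x (S t)) (x q).
Proof.
  intros H1 H2 delta Hdelta.
  assert (Hnu_pos : 0 < INR nu) by (apply lt_0_INR; lia).
  set (eta := delta / INR nu).
  assert (Heta : 0 < eta) by (apply Rdiv_lt_0_compat; lra).
  destruct (Un_cv_0_eventually_le _ eta H1 Heta) as [L1 HL1].
  destruct (Un_cv_0_eventually_le _ eta H2 Heta) as [L2 HL2].
  exists (Nat.max L1 L2 + nu)%nat. intros t q Ht Hq.
  replace delta with (INR nu * eta) by (unfold eta; field; lra).
  apply (gen_metric_shift_le eta (Nat.max L1 L2)); [| |lia|lia];
    intros j Hj; [apply HL1|apply HL2]; lia.
Qed.

End GeneralizedMetric.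

Definition crossing {X : Type} (d : X -> X -> R) (x : nat -> X) (E : R) (a c : nat) : Prop :=
  (a + 2 <= c)%nat /\ E < d (x a) (x c) /\ d (x a) (x (pred c)) <= E.

Lemma first_exceedance (f : nat -> R) (E : R) (k j : nat) :
  f k <= E -> E < f (k + j)%nat -> exists c, (k < c)%nat /\ E < f c /\ f (pred c) <= E.
Proof.
  intro Hk. induction j as [|j IH]; intro Hj.
  - rewrite Nat.add_0_r in Hj. lra.
  - destruct (Rle_lt_dec (f (k + j)%nat) E) as [Hle|Hlt].
    + exists (k + S j)%nat. split; [lia|]. split; [exact Hj|].
      now replace (pred (k + S j)) with (k + j)%nat by lia.
    + destruct (IH Hlt) as [c Hc]. now exists c.
Qed.

Lemma not_Cauchy_crossings {X : Type} (d : X -> X -> R) (x : nat -> X) :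
  Un_cv (fun n => d (x n) (x (S n))) 0 -> ~ Cauchy_seq d x ->
  exists E, 0 < E /\ forall N, exists a c, (N <= a)%nat /\ crossing d x E a c.
Proof.
  intros H1 Hnot. apply not_all_ex_not in Hnot as [E HE].
  apply imply_to_and in HE as [HE Hfar].
  exists E. split; [exact HE|]. intro N.
  destruct (Un_cv_0_eventually_le _ E H1 HE) as [N1 HN1].
  apply not_ex_all_not with (n := Nat.max N N1) in Hfar.
  apply not_all_ex_not in Hfar as [n Hfar].
  apply not_all_ex_not in Hfar as [m Hfar].
  apply imply_to_and in Hfar as [Hn Hfar]. apply Rnot_le_lt in Hfar.
  destruct (first_exceedance (fun c => d (x n) (x c)) E (S n) (m * 1))
    as [c [Hc [Hcross Hprev]]].
  - exact (HN1 n ltac:(lia)).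
  - now replace (S n + m * 1)%nat with (n + 1 + m * 1)%nat by lia.
  - exists n, c. repeat split; [lia|lia|exact Hcross|exact Hprev].
Qed.

Lemma interleaved_choice (P : nat -> nat -> Prop) :
  (forall N, exists a c, (N <= a)%nat /\ P a c) ->
  exists a c : nat -> nat, forall i, P (a i) (c i) /\ (c i < a (S i))%nat.
Proof.
  intro HP.
  assert (Hpair : forall N, exists ac : nat * nat, (N <= fst ac)%nat /\ P (fst ac) (snd ac)).
  { intro N. destruct (HP N) as [a [c H]]. now exists (a, c). }
  set (F := fun N => proj1_sig (constructive_indefinite_description _ (Hpair N))).
  assert (HF : forall N, (N <= fst (F N))%nat /\ P (fst (F N)) (snd (F N))).
  { intro N. unfold F. now destruct (constructive_indefinite_description _ (Hpair N)). }
  set (s := nat_rect (fun _ => (nat * nat)%type) (F 0%nat) (fun _ ac => F (S (snd ac)))).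
  exists (fun i => fst (s i)), (fun i => snd (s i)). intro i. split.
  - destruct i; apply HF.
  - apply HF.
Qed.

Theorem theorem2p2 (X : Type) (d : X -> X -> R) (nu : nat) (x : nat -> X)
  (Hnu : (1 <= nu)%nat)
  (Hd : gen_metric X d nu)
  (Hdist : forall n m : nat, n <> m -> x n <> x m)
  (Hsub : forall eps : R, 0 < eps -> forall p q : nat -> nat,
      strictly_incr p -> strictly_incr q ->
      limsup_le (fun i => d (x (p i)) (x (q i))) eps ->
      exists N : nat, forall i, (N <= i)%nat -> d (x (S (p i))) (x (S (q i))) <= eps)
  (H1 : Un_cv (fun n => d (x n) (x (S n))) 0)
  (H2 : Un_cv (fun n => d (x n) (x (S (S n)))) 0) :
  Cauchy_seq d x.
Proof.
  apply NNPP. intro Hnot.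
  destruct (not_Cauchy_crossings d x H1 Hnot) as [E [HE Hcross]].
  destruct (interleaved_choice _ Hcross) as [a [c Hac]].
  set (p := fun i => pred (a i)). set (q := fun i => pred (c i)).
  assert (Hp : strictly_incr p).
  { intro i. destruct (Hac i) as [[? _] ?]. unfold p. lia. }
  assert (Hq : strictly_incr q).
  { intro i. destruct (Hac i) as [_ ?], (Hac (S i)) as [[? _] _]. unfold q. lia. }
  assert (Hlim : limsup_le (fun i => d (x (p i)) (x (q i))) E).
  { intros delta Hdelta.
    destruct (eventually_shift_le X d nu x Hnu Hd Hdist H1 H2 delta Hdelta) as [M HM].
    exists (S M). intros i Hi.
    pose proof (strictly_incr_ge p Hp i).
    destruct (Hac i) as [[Hac2 [_ Hprev]] _].
    assert (Ha : a i = S (p i)) by (unfold p in *; lia).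
    rewrite Ha in Hac2, Hprev.
    pose proof (HM (p i) (q i) ltac:(lia) ltac:(unfold q; lia)). unfold q in *. lra. }
  destruct (Hsub E HE p q Hp Hq Hlim) as [N HN].
  specialize (HN (S N) ltac:(lia)).
  destruct (Hac N) as [[? _] ?], (Hac (S N)) as [[? [Hfar _]] _].
  unfold p, q in HN. rewrite !Nat.succ_pred_pos in HN by lia. lra.
Qed.
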